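(* Let $d\ge 3$. For every $1\le i<d$, the element $a_1a_2\cdots a_i$ has infinite order in $G_d$.
   Context: Let $d\ge 3$, $X=\{1,\dots,d\}$, $T$ the $d$-regular rooted tree with vertex set $X^*$. $\mathrm{Aut}(T)$ is the group of root-preserving automorphisms with product left-to-right: $(gh)(u)=h(g(u))$. Sections $g|_u$ are defined by $g(uv)=g(u)\,g|_u(v)$; we write $g=(g|_1,\dots,g|_d)\lambda_g$ with $\lambda_g\in S_d$ the action on the first level; $e$ is the identity; $\overline{j}\in\{1,\dots,d\}$ denotes $j$ mod $d$. $G_d=\langle a_1,\dots,a_d\rangle\le\mathrm{Aut}(T)$ where $a_i$ acts on the first level as $(i\ \overline{i+1})$, with $a_i|_i=a_i$, $a_i|_{\overline{i+1}}=a_{\overline{i+1}}$, and $a_i|_x=e$ otherwise. *)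

From mathcomp Require Import all_boot.
Set Implicit Arguments. Unset Strict Implicit. Unset Printing Implicit Defensive.

(* Alphabet X = {1,...,d} encoded as natural numbers 1..d; vertices of the
   d-regular rooted tree T are words over X, i.e. sequences of such naturals. *)
Definition is_letter (d x : nat) : bool := (1 <= x <= d).
Definition is_vertex (d : nat) (u : seq nat) : bool := all (is_letter d) u.

(* \overline{j+1} : the successor of j in {1..d} taken mod d (d |-> 1). *)
Definition nxt (d j : nat) : nat := (j %% d).+1.

(* Action of the generator a_i on vertices:
   a_i = (sections) (i  i+1), with a_i|_i = a_i, a_i|_{i+1} = a_{i+1},
   a_i|_x = e otherwise; g(x v) = lambda_g(x) g|_x(v). *)
Fixpoint act_a (d i : nat) (w : seq nat) : seq nat :=
  match w with
  | [::] => [::]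
  | x :: v =>
      if x == i then nxt d i :: act_a d i v
      else if x == nxt d i then i :: act_a d (nxt d i) v
      else x :: v
  end.

(* Action of the product a_{s_1} a_{s_2} ... a_{s_k} with the left-to-right
   convention (gh)(u) = h(g(u)): first apply a_{s_1}, then a_{s_2}, ... *)
Definition act_prod (d : nat) (s : seq nat) (u : seq nat) : seq nat :=
  foldl (fun w j => act_a d j w) u s.

Definition infinite_order (d : nat) (g : seq nat -> seq nat) : Prop :=
  forall n : nat, 0 < n -> exists u : seq nat, is_vertex d u /\ iter n g u <> u.

(** Write [g|_x] for the section of [g] at a letter fixed by [g].  If
   [g^m] fixes [x] then [g] has infinite order as soon as [(g^m)|_x] has.
   For [g = a_1 ... a_i] the letter 1 lies on a cycle of length [i+1] of the
   first-level permutation, and [(g^(i+1))|_1 = a_1 ... a_i a_(i+1) a_i ... a_2].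
   For these "zigzag" words, [(z_q^3)|_1 = z_(q+1)], and [z_(d-1)] fixes 1 with
   section [c = a_1 ... a_d].  Finally [c] permutes [2] in a cycle of length
   [d-1] with section [r = a_2 a_1 a_d ... a_3], and [r] permutes [1] in a cycle
   of length [d-1] with section [c]; a descent on the exponent then shows that
   no positive power of [c] acts trivially. *)

From mathcomp Require Import all_boot zify.
Set Implicit Arguments. Unset Strict Implicit. Unset Printing Implicit Defensive.

(* First-level image of [x] under [a_j], paired with the word of the section. *)
Definition gen_step d j x : nat * seq nat :=
  if x == j then (nxt d j, [:: j])
  else if x == nxt d j then (j, [:: nxt d j]) else (x, [::]).

Fixpoint word_step d (s : seq nat) x : nat * seq nat :=
  match s with
  | [::] => (x, [::])
  | j :: s' =>
      let: (y, t) := gen_step d j x in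
      let: (z, t') := word_step d s' y in (z, t ++ t')
  end.

Fixpoint downseq (h n : nat) : seq nat :=
  if n is n'.+1 then h :: downseq h.-1 n' else [::].

Lemma flatten_downseq c a n :
  flatten [seq [:: c - k] | k <- iota a n] = downseq (c - a) n.
Proof. by elim: n a => [|n IH] a //=; rewrite IH subnS. Qed.

Lemma downseq_rcons h n : downseq h n ++ [:: h - n] = downseq h n.+1.
Proof.
elim: n h => [|n IH] h; first by rewrite subn0.
rewrite [LHS]/= -[RHS]/(h :: downseq h.-1 n.+1) -IH.
by congr (_ :: _ ++ [:: _]); lia.
Qed.

Lemma iota_succ_cat a n : iota a n.+1 = iota a n ++ [:: a + n].
Proof. by rewrite -addn1 iotaD. Qed.

Lemma flatten_iota_singletons a n :
  flatten [seq [:: k.+2] | k <- iota a n] = iota a.+2 n.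
Proof. by elim: n a => [|n IH] a //=; rewrite IH. Qed.

Definition zigzag q := iota 1 q ++ downseq q.+1 q.

Definition rotated_word d := [:: 2; 1; d] ++ downseq d.-1 (d - 3).

Definition fixes_with_section (f g : seq nat -> seq nat) x :=
  forall v, f (x :: v) = x :: g v.

Definition cycles_with_section (f g : seq nat -> seq nat) x m :=
  fixes_with_section (iter m f) g x /\
  forall n, iter n f [:: x] = [:: x] -> m %| n.

Section WordAction.

Variable d : nat.

Lemma act_a_cons j x v :
  act_a d j (x :: v) = (gen_step d j x).1 :: act_prod d (gen_step d j x).2 v.
Proof. by rewrite /gen_step /=; case: eqP => _ //; case: eqP. Qed.

Lemma act_prod_cons s x v :
  act_prod d s (x :: v) = (word_step d s x).1 :: act_prod d (word_step d s x).2 v.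
Proof.
elim: s x v => [|j s IH] x v //.
rewrite -[act_prod d _ _]/(act_prod d s (act_a d j (x :: v))) act_a_cons IH /=.
case: (gen_step d j x) => y t /=; case: (word_step d s y) => z t' /=.
by rewrite /act_prod foldl_cat.
Qed.

Lemma word_step_cat s1 s2 x y z t1 t2 :
  word_step d s1 x = (y, t1) -> word_step d s2 y = (z, t2) ->
  word_step d (s1 ++ s2) x = (z, t1 ++ t2).
Proof.
elim: s1 x y t1 => [|j s IH] x y t1 /=; first by case=> -> <-.
case: (gen_step d j x) => y' t; case E: (word_step d s y') => [z' t'] /=.
by case=> <- <- h2; rewrite (IH _ _ _ E h2) catA.
Qed.

Lemma word_step_cons j s x y z t1 t2 :
  gen_step d j x = (y, t1) -> word_step d s y = (z, t2) ->
  word_step d (j :: s) x = (z, t1 ++ t2).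
Proof. by move=> /= -> ->. Qed.

Lemma nxt_small j : j < d -> nxt d j = j.+1.
Proof. by move=> h; rewrite /nxt modn_small. Qed.

Lemma nxt_last : 0 < d -> nxt d d = 1.
Proof. by move=> h; rewrite /nxt modnn. Qed.

Lemma gen_step_self j : gen_step d j j = (nxt d j, [:: j]).
Proof. by rewrite /gen_step eqxx. Qed.

Lemma gen_step_nxt j : nxt d j != j -> gen_step d j (nxt d j) = (j, [:: nxt d j]).
Proof. by move=> h; rewrite /gen_step (negbTE h) eqxx. Qed.

Lemma gen_step_succ j : j < d -> gen_step d j j.+1 = (j, [:: j.+1]).
Proof.
by move=> hj; rewrite -(nxt_small hj) gen_step_nxt // nxt_small //; apply/eqP; lia.
Qed.

Lemma gen_step_other j x : x != j -> x != nxt d j -> gen_step d j x = (x, [::]).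
Proof. by move=> h1 h2; rewrite /gen_step (negbTE h1) (negbTE h2). Qed.

Lemma gen_step_last_self : 0 < d -> gen_step d d d = (1, [:: d]).
Proof. by move=> hd; rewrite gen_step_self nxt_last. Qed.

Lemma gen_step_last_one : 1 < d -> gen_step d d 1 = (d, [:: 1]).
Proof.
by move=> hd; rewrite -(nxt_last (ltnW hd)) gen_step_nxt // nxt_last; [apply/eqP|]; lia.
Qed.

Lemma gen_step_other_small j x : j < d -> x != j -> x != j.+1 ->
  gen_step d j x = (x, [::]).
Proof. by move=> hj h1 h2; rewrite gen_step_other ?nxt_small. Qed.

Lemma gen_step_other_last x : 1 < x < d -> gen_step d d x = (x, [::]).
Proof. by move=> h; rewrite gen_step_other ?nxt_last; [|apply/eqP; lia..]. Qed.

Lemma word_step_iota_base a n : a + n <= d -> word_step d (iota a n) a = (a + n, iota a n).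
Proof.
elim: n a => [|n IH] a h; first by rewrite addn0.
apply: (word_step_cons (t1 := [:: a])); first by rewrite gen_step_self nxt_small //; lia.
by rewrite IH ?addSnnS //; lia.
Qed.

Lemma word_step_iota_out a n x : a + n <= d -> (x < a) || (a + n < x) ->
  word_step d (iota a n) x = (x, [::]).
Proof.
elim: n a => [|n IH] a h hx //.
apply: (word_step_cons (t1 := [::])); last by apply: IH; lia.
by apply: gen_step_other_small; [|apply/eqP..]; lia.
Qed.

Lemma word_step_iota_shift a n x : a + n <= d -> a < x <= a + n ->
  word_step d (iota a n) x = (x.-1, [:: x]).
Proof.
elim: n a => [|n IH] a h hx; first lia.
have [->|nx] := eqVneq x a.+1.
  apply: (word_step_cons (t1 := [:: a.+1]) (t2 := [::])).
    by rewrite gen_step_succ //; lia.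
  by apply: word_step_iota_out; lia.
apply: (word_step_cons (t1 := [::])); last by apply: IH; lia.
by apply: gen_step_other_small; [|apply/eqP|]; lia.
Qed.

Lemma word_step_downseq_out h n x : h < d -> (x + n <= h) || (h.+1 < x) ->
  word_step d (downseq h n) x = (x, [::]).
Proof.
elim: n h => [|n IH] h hd hx //.
apply: (word_step_cons (t1 := [::])); last by apply: IH; lia.
by apply: gen_step_other_small; [|apply/eqP..]; lia.
Qed.

Lemma word_step_downseq_shift h n x : h < d -> 0 < x -> h < x + n -> x <= h ->
  word_step d (downseq h n) x = (x.+1, [:: x]).
Proof.
elim: n h => [|n IH] h hd h0 h1 h2; first lia.
have [->|nx] := eqVneq x h.
  apply: (word_step_cons (t1 := [:: h]) (t2 := [::])).
    by rewrite gen_step_self nxt_small.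
  by apply: word_step_downseq_out; lia.
apply: (word_step_cons (t1 := [::])); last by apply: IH; lia.
by apply: gen_step_other_small; [|apply/eqP|]; lia.
Qed.

Lemma word_step_downseq_top h n : h < d -> n <= h ->
  word_step d (downseq h n) h.+1 = (h.+1 - n, downseq h.+1 n).
Proof.
elim: n h => [|n IH] h hd hn; first by rewrite subn0.
apply: (word_step_cons (t1 := [:: h.+1])).
  by rewrite gen_step_succ.
have -> : h = h.-1.+1 by lia.
by rewrite IH; [congr pair|..]; lia.
Qed.

End WordAction.

Lemma fixes_with_section_iter f g x q :
  fixes_with_section f g x -> fixes_with_section (iter q f) (iter q g) x.
Proof. by move=> H; elim: q => [|q IH] v //=; rewrite IH H. Qed.

Section WordCycle.

(* [x] is the orbit of [x 0] under the first-level permutation of the word [s];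
   [t k] is the word of the section of [s] at [x k]. *)
Variables (d : nat) (s : seq nat) (x : nat -> nat) (t : nat -> seq nat) (m : nat).
Hypothesis word_step_orbit : forall k, k < m -> word_step d s (x k) = (x k.+1, t k).

Lemma iter_word_orbit k v : k <= m ->
  iter k (act_prod d s) (x 0 :: v) =
  x k :: act_prod d (flatten [seq t j | j <- iota 0 k]) v.
Proof.
elim: k v => [|k IH] v hk //.
rewrite iterS IH 1?act_prod_cons ?word_step_orbit; try lia.
rewrite -addn1 iotaD map_cat flatten_cat /= cats0.
by rewrite /act_prod foldl_cat.
Qed.

Hypothesis orbit_closed : x m = x 0.

Lemma word_cycle_section :
  fixes_with_section (iter m (act_prod d s))
    (act_prod d (flatten [seq t j | j <- iota 0 m])) (x 0).
Proof. by move=> v; rewrite iter_word_orbit // orbit_closed. Qed.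

Hypothesis orbit_simple : forall j, 0 < j < m -> x j != x 0.

Lemma word_cycle : 0 < m ->
  cycles_with_section (act_prod d s) (act_prod d (flatten [seq t j | j <- iota 0 m]))
    (x 0) m.
Proof.
move=> m_gt0; split; first exact: word_cycle_section.
move=> n; rewrite {1}(divn_eq n m) addnC iterD iterM.
rewrite (fixes_with_section_iter _ word_cycle_section) iter_word_orbit; last first.
  by rewrite ltnW // ltn_pmod.
case=> /eqP + _; rewrite /dvdn; apply: contraLR => hj.
by apply: orbit_simple; rewrite lt0n hj ltn_pmod.
Qed.

End WordCycle.

Section InfiniteOrder.

Variable d : nat.

Lemma infinite_order_section (f g : seq nat -> seq nat) x m :
  0 < m -> is_letter d x -> fixes_with_section (iter m f) g x ->
  infinite_order d g -> infinite_order d f.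
Proof.
move=> m_gt0 hx Hfg Hg n n_gt0.
have [w [hw hne]] := Hg n n_gt0.
exists (x :: w); split; first by rewrite /= hx.
move=> fix_n; apply: hne.
have : iter (n * m) f (x :: w) = x :: iter n g w.
  by rewrite iterM; apply: fixes_with_section_iter.
by rewrite mulnC iterM iter_fix // => -[].
Qed.

(* If [f^n] fixes [x] then [n = m n1] and [(f^n)|_x = g^n1]; if moreover [g^n1]
   fixes [y] then [n1 = m n2] and [(g^n1)|_y = f^n2], with [n2 < n] as [1 < m]. *)
Lemma infinite_order_section_swap (f g : seq nat -> seq nat) x y m :
  1 < m -> is_letter d x -> is_letter d y ->
  cycles_with_section f g x m -> cycles_with_section g f y m ->
  infinite_order d f.
Proof.
move=> m_gt1 hx hy [Hf per_f] [Hg per_g] n.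
elim: n {-2}n (leqnn n) => [|N IH] n hnN n_gt0; first lia.
have [fix_x|] := eqVneq (iter n f [:: x]) [:: x]; last first.
  by move/eqP=> ne; exists [:: x]; rewrite /= hx.
have /dvdnP [n1 en] := per_f _ fix_x.
have Fx : fixes_with_section (iter n f) (iter n1 g) x.
  by move=> v; rewrite en iterM; apply: fixes_with_section_iter.
have [fix_y|] := eqVneq (iter n1 g [:: y]) [:: y]; last first.
  move/eqP=> ne; exists [:: x; y]; split; first by rewrite /= hx hy.
  by rewrite Fx => -[].
have /dvdnP [n2 en2] := per_g _ fix_y.
have Fy : fixes_with_section (iter n1 g) (iter n2 f) y.
  by move=> v; rewrite en2 iterM; apply: fixes_with_section_iter.
rewrite en en2 in hnN n_gt0.
have n2_le : n2 <= N by nia.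
have [w [hw hne]] := IH n2 n2_le ltac:(nia).
exists [:: x, y & w]; split; first by rewrite /= hx hy hw.
by rewrite Fx Fy => -[].
Qed.

End InfiniteOrder.

Lemma prefix_power_section d i : 1 <= i -> i < d ->
  fixes_with_section (iter i.+1 (act_prod d (iota 1 i))) (act_prod d (zigzag i)) 1.
Proof.
move=> i_gt0 lt_id.
pose x k := if k == 0 then 1 else i.+2 - k.
pose t k := if k == 0 then iota 1 i else [:: i.+2 - k].
have H k : k < i.+1 -> word_step d (iota 1 i) (x k) = (x k.+1, t k).
  rewrite /x /t; case: k => [|k] hk /=.
  - by rewrite word_step_iota_base; [congr pair|]; lia.
  - by rewrite word_step_iota_shift; [congr pair|..]; lia.
have -> : zigzag i = flatten [seq t j | j <- iota 0 i.+1].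
  rewrite /= -/(iota 1 i) /zigzag -[i.+1]/(i.+2 - 1) -flatten_downseq; congr (_ ++ _).
  by congr flatten; apply/eq_in_map => k; rewrite mem_iota /t; case: eqP => //; lia.
by apply: (word_cycle_section H); rewrite /x /=; lia.
Qed.

Lemma zigzag_cube_section d q : 1 <= q -> q.+2 <= d ->
  fixes_with_section (iter 3 (act_prod d (zigzag q))) (act_prod d (zigzag q.+1)) 1.
Proof.
move=> q_gt0 lt_qd.
pose x k := if k == 0 then 1 else if k == 1 then q.+2 else if k == 2 then 2 else 1.
pose t k :=
  if k == 0 then iota 1 q ++ [:: q.+1] else if k == 1 then downseq q.+2 q else [:: 2].
have H k : k < 3 -> word_step d (zigzag q) (x k) = (x k.+1, t k).
  rewrite /x /t /zigzag; case: k => [|[|[|k]]] hk //=.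
  - apply: (word_step_cat (y := q.+1)); first by apply: word_step_iota_base; lia.
    by apply: word_step_downseq_shift; lia.
  - apply: (word_step_cat (t1 := [::])).
      by apply: word_step_iota_out; lia.
    by rewrite word_step_downseq_top; [congr pair|..]; lia.
  - apply: (word_step_cat (t1 := [:: 2]) (t2 := [::])).
      by apply: word_step_iota_shift; lia.
    by apply: word_step_downseq_out; lia.
have -> : zigzag q.+1 = flatten [seq t j | j <- iota 0 3].
  rewrite /t /= /zigzag iota_succ_cat -downseq_rcons.
  by have -> : q.+2 - q = 2 by lia.
exact: (word_cycle_section H).
Qed.

Section FullAndRotatedWords.

Variable d : nat.
Hypothesis le3d : 3 <= d.

Let iota_last : iota 1 d = iota 1 d.-1 ++ [:: d].
Proof. by rewrite -{1}(prednK (_ : 0 < d)) ?iota_succ_cat ?add1n ?prednK //; lia. Qed.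

Lemma zigzag_last_section :
  fixes_with_section (act_prod d (zigzag d.-1)) (act_prod d (iota 1 d)) 1.
Proof.
move=> v; rewrite act_prod_cons.
have -> : word_step d (zigzag d.-1) 1 = (1, iota 1 d).
  rewrite iota_last /zigzag prednK; last by lia.
  apply: (word_step_cat (y := d)).
    by rewrite word_step_iota_base ?add1n ?prednK //; lia.
  rewrite (_ : d.-1 = d.-2.+1); last by lia.
  apply: (word_step_cons (t1 := [:: d]) (t2 := [::])).
    by rewrite gen_step_last_self //; lia.
  by apply: word_step_downseq_out; lia.
by [].
Qed.

Lemma full_word_step_two : word_step d (iota 1 d) 2 = (d, [:: 2; 1]).
Proof.
rewrite iota_last; apply: (word_step_cat (y := 1) (t1 := [:: 2]) (t2 := [:: 1])).
  by apply: word_step_iota_shift; lia.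
by apply: (word_step_cons (t1 := [:: 1]) (t2 := [::])); rewrite ?gen_step_last_one //; lia.
Qed.

Lemma full_word_step_down y : 2 < y <= d -> word_step d (iota 1 d) y = (y.-1, [:: y]).
Proof.
move=> hy; rewrite iota_last; apply: (word_step_cat (t1 := [:: y]) (t2 := [::])).
  by apply: word_step_iota_shift; lia.
by apply: (word_step_cons (t1 := [::])); rewrite ?gen_step_other_last //; lia.
Qed.

Lemma full_word_cycle :
  cycles_with_section (act_prod d (iota 1 d)) (act_prod d (rotated_word d)) 2 d.-1.
Proof.
pose x j := if j == 0 then 2 else d.+1 - j.
pose t j := if j == 0 then [:: 2; 1] else [:: d.+1 - j].
have H j : j < d.-1 -> word_step d (iota 1 d) (x j) = (x j.+1, t j).
  case: j => [|j] hj; first by rewrite -[x 1]/(d.+1 - 1) subn1 full_word_step_two.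
  rewrite -[x _]/(d - j) -[x _]/(d - j.+1) -[t _]/[:: d - j].
  by rewrite full_word_step_down; [congr pair|]; lia.
have -> : rotated_word d = flatten [seq t j | j <- iota 0 d.-1].
  rewrite /rotated_word (_ : d.-1 = (d - 3).+2); last by lia.
  rewrite /= -/(iota 2 (d - 3)) (_ : (d - 3).+2 = d.+1 - 2); last by lia.
  rewrite -flatten_downseq subn1; congr [:: _, _, _ & flatten _].
  by apply/eq_in_map => j; rewrite mem_iota /t; case: eqP => //; lia.
apply: word_cycle H _ _ _ => [|j hj|]; rewrite /x ?ifN_eq; try apply/eqP; lia.
Qed.

Let fixed_by_a2_a1 y : 3 < y -> gen_step d 2 y = (y, [::]) /\ gen_step d 1 y = (y, [::]).
Proof. by move=> hy; split; apply: gen_step_other_small; try apply/eqP; lia. Qed.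

Lemma rotated_word_step_one : word_step d (rotated_word d) 1 = (2, [:: 1]).
Proof.
apply: (word_step_cat (y := 2) (t1 := [:: 1]) (t2 := [::])); last first.
  by apply: word_step_downseq_out; lia.
apply: (word_step_cons (t1 := [::])); first by apply: gen_step_other_small; lia.
apply: (word_step_cons (t1 := [:: 1])); first by rewrite gen_step_self nxt_small //; lia.
by apply: (word_step_cons (t1 := [::])); rewrite ?gen_step_other_last //; lia.
Qed.

Lemma rotated_word_step_two : 3 < d -> word_step d (rotated_word d) 2 = (4, [:: 2; 3]).
Proof.
move=> lt3d; apply: (word_step_cat (y := 3) (t1 := [:: 2])); last first.
  by apply: word_step_downseq_shift; lia.
apply: (word_step_cons (t1 := [:: 2])); first by rewrite gen_step_self nxt_small //; lia.
apply: (word_step_cons (t1 := [::])); first by apply: gen_step_other_small; lia.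
by apply: (word_step_cons (t1 := [::])); rewrite ?gen_step_other_last //; lia.
Qed.

Lemma rotated_word_step_mid y : 3 < y < d ->
  word_step d (rotated_word d) y = (y.+1, [:: y]).
Proof.
move=> hy; have [fix2 fix1] := fixed_by_a2_a1 (y := y) ltac:(lia).
apply: (word_step_cat (y := y) (t1 := [::])); last first.
  by apply: word_step_downseq_shift; lia.
apply: (word_step_cons fix2); apply: (word_step_cons fix1).
by apply: (word_step_cons (t1 := [::])); rewrite ?gen_step_other_last //; lia.
Qed.

Lemma rotated_word_step_last : 3 < d -> word_step d (rotated_word d) d = (1, [:: d]).
Proof.
move=> lt3d; have [fix2 fix1] := fixed_by_a2_a1 lt3d.
apply: (word_step_cat (y := 1) (t1 := [:: d]) (t2 := [::])).
  apply: (word_step_cons fix2); apply: (word_step_cons fix1).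
  apply: (word_step_cons (t1 := [:: d]) (t2 := [::])).
    by rewrite gen_step_last_self //; lia.
  by [].
by apply: word_step_downseq_out; lia.
Qed.

Lemma rotated_word_cycle :
  cycles_with_section (act_prod d (rotated_word d)) (act_prod d (iota 1 d)) 1 d.-1.
Proof.
pose x j := if j == 0 then 1 else if j == 1 then 2 else if j == d.-1 then 1 else j.+2.
pose t j := if j == 0 then [:: 1] else if j == 1 then [:: 2; 3] else [:: j.+2].
have x_last : x d.-1 = 1 by rewrite /x eqxx !ifN_eq //; apply/eqP; lia.
have x_mid j : 1 < j < d.-1 -> x j = j.+2.
  by move=> hj; rewrite /x !ifN_eq //; apply/eqP; lia.
have H j : j < d.-1 -> word_step d (rotated_word d) (x j) = (x j.+1, t j).
  case: j => [|[|j]] hj; first exact: rotated_word_step_one.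
    have [e3|lt3d] := eqVneq d 3; first by rewrite /x /t e3.
    by rewrite (x_mid 2) ?rotated_word_step_two //; lia.
  rewrite x_mid -?[t _]/[:: j.+4]; last by lia.
  have [ejd|nejd] := eqVneq j.+4 d.
    have x_j3 : x j.+3 = 1 by rewrite -x_last -ejd.
    by rewrite x_j3 ejd rotated_word_step_last //; lia.
  by rewrite x_mid ?rotated_word_step_mid //; lia.
have -> : iota 1 d = flatten [seq t j | j <- iota 0 d.-1].
  rewrite -(subnKC le3d) -[3 + _]/(d - 3).+3 /= -/(iota 2 (d - 3)).
  rewrite -flatten_iota_singletons; congr [:: _, _, _ & flatten _].
  by apply/eq_in_map => j; rewrite mem_iota => hj; rewrite /t !ifN_eq //; apply/eqP; lia.
apply: word_cycle H _ _ _ => [//|j hj|]; last by lia.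
have [->//|ne1] := eqVneq j 1.
by rewrite x_mid -?[x 0]/1; lia.
Qed.

End FullAndRotatedWords.

Lemma full_word_infinite d : 3 <= d -> infinite_order d (act_prod d (iota 1 d)).
Proof.
move=> le3d; apply: (infinite_order_section_swap (x := 2) (y := 1) (m := d.-1)).
- lia.
- by rewrite /is_letter; lia.
- by rewrite /is_letter; lia.
- exact: full_word_cycle.
- exact: rotated_word_cycle.
Qed.

Lemma zigzag_infinite d q : 3 <= d -> 1 <= q < d ->
  infinite_order d (act_prod d (zigzag q)).
Proof.
move=> le3d hq; have one_letter : is_letter d 1 by rewrite /is_letter; lia.
move: {2}(d.-1 - q) (erefl (d.-1 - q)) hq => n; elim: n q => [|n IH] q def_n hq.
  have -> : q = d.-1 by lia.
  apply: (infinite_order_section (m := 1)) (zigzag_last_section le3d) _ => //.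
  exact: full_word_infinite.
apply: (infinite_order_section (m := 3)) (zigzag_cube_section _ _) (IH _ _ _) => //; lia.
Qed.

Theorem lemma3p6 (d i : nat) (hd : 3 <= d) (hi1 : 1 <= i) (hid : i < d) :
  infinite_order d (act_prod d (iota 1 i)).
Proof.
apply: infinite_order_section (prefix_power_section hi1 hid) _ => //.
  by rewrite /is_letter; lia.
by apply: zigzag_infinite; lia.
Qed.
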